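(* For every integer $n\ge 1$, the strong product $P_3\boxtimes R_n$ is $1$-perfectly orientable.
   Context: All graphs are finite and simple. An orientation of a graph $G$ is $1$-perfect if the out-neighborhood of every vertex induces a clique in $G$; $G$ is $1$-perfectly orientable if it admits a $1$-perfect orientation. The strong product $G\boxtimes H$ has vertex set $V(G)\times V(H)$, with distinct $(u,v),(u',v')$ adjacent iff $u'\in N_G[u]$ and $v'\in N_H[v]$ (closed neighborhoods). $P_3$ is the path on $3$ vertices. For an integer $n\ge 0$, the raft $R_n$ is the graph with vertex set $X\cup Y$, where $X=\{x_0,\dots,x_n\}$ and $Y=\{y_0,\dots,y_n\}$ are disjoint cliques, and, for $0\le i,j\le n$, $x_i$ is adjacent to $y_j$ iff $i+j\ge n+1$ (no other edges). *)

(* A simple graph = finType T with symmetric irreflexive e : rel T. *)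
From mathcomp Require Import all_boot.
Set Implicit Arguments. Unset Strict Implicit. Unset Printing Implicit Defensive.

Definition cnbr (T : eqType) (e : rel T) (x y : T) : bool := (x == y) || e x y.

Definition strong_prod (T1 T2 : eqType) (e1 : rel T1) (e2 : rel T2) : rel (T1 * T2) :=
  fun p q => [&& p != q, cnbr e1 p.1 q.1 & cnbr e2 p.2 q.2].

Definition P3_adj : rel 'I_3 :=
  fun i j => (i.+1 == j :> nat) || (j.+1 == i :> nat).

(* The raft R_n: vertex (false, i) is x_i, vertex (true, j) is y_j, 0 <= i,j <= n.
   X and Y are cliques; x_i ~ y_j iff i + j >= n + 1. *)
Definition raft_adj (n : nat) : rel (bool * 'I_n.+1) :=
  fun p q => (p != q) &&
    (if p.1 == q.1 then true else (n.+1 <= p.2 + q.2)).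

Definition is_orientation (T : finType) (e o : rel T) : Prop :=
  (forall x y, o x y -> e x y) /\
  (forall x y, e x y -> o x y || o y x) /\
  (forall x y, ~~ (o x y && o y x)).

Definition one_perfect (T : finType) (e o : rel T) : Prop :=
  forall x y z, o x y -> o x z -> y != z -> e y z.

Definition one_perfectly_orientable (T : finType) (e : rel T) : Prop :=
  exists o : rel T, is_orientation e o /\ one_perfect e o.
Arguments raft_adj n : clear implicits.

(* Inside each side of the raft the arcs follow a linear order: on the x side
   the vertices of P3-layer 2 come first, then those of layers 0 and 1 by raft
   index, layer 0 first on ties; on the y side the same with layers 0 and 2
   swapped. Between the two sides arcs go from x to y when neither endpoint is in
   layer 2, and from y to x otherwise. The out-neighbourhood of a vertex on side
   s then lies in two consecutive layers and consists of vertices of side s with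
   index at least k and vertices of the other side with index at least n+1-k,
   for some k; any two such vertices are adjacent in P3 ⊠ R_n. *)

From mathcomp Require Import all_boot zify.

Set Implicit Arguments.
Unset Strict Implicit.
Unset Printing Implicit Defensive.

Lemma cnbr_sym (T : eqType) (e : rel T) : symmetric e -> symmetric (cnbr e).
Proof. by move=> eC x y; rewrite /cnbr eq_sym eC. Qed.

Lemma strong_prod_sym (T1 T2 : eqType) (e1 : rel T1) (e2 : rel T2) :
  symmetric e1 -> symmetric e2 -> symmetric (strong_prod e1 e2).
Proof.
by move=> e1C e2C p q; rewrite /strong_prod eq_sym (cnbr_sym e1C) (cnbr_sym e2C).
Qed.

Lemma orientation_of_dir (T : finType) (e d : rel T) :
  symmetric e -> (forall x y, e x y -> d y x = ~~ d x y) ->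
  is_orientation e (fun x y => e x y && d x y).
Proof.
move=> eC dC; split; [|split] => x y /=.
- by case/andP.
- by move=> exy; rewrite [e y x]eC exy (dC _ _ exy) orbN.
- by rewrite [e y x]eC; case exy: (e x y); rewrite //= (dC _ _ exy) andbN.
Qed.

Lemma P3_cnbr (a b : 'I_3) : cnbr P3_adj a b = (a <= b.+1) && (b <= a.+1).
Proof. rewrite /cnbr /P3_adj -val_eqE /=; lia. Qed.

Lemma raft_cnbr n (p q : bool * 'I_n.+1) :
  cnbr (raft_adj n) p q = (p.1 == q.1) || (n.+1 <= p.2 + q.2).
Proof.
rewrite /cnbr /raft_adj; case: eqP => [-> | _] /=; first by rewrite eqxx.
by case: eqP.
Qed.

Lemma P3_sym : symmetric P3_adj.
Proof. by move=> a b; rewrite /P3_adj orbC. Qed.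

Lemma raft_sym n : symmetric (raft_adj n).
Proof. by move=> p q; rewrite /raft_adj eq_sym [q.1 == _]eq_sym addnC. Qed.

Section Raft.

Variable n : nat.

Local Notation V := ('I_3 * (bool * 'I_n.+1))%type.
Local Notation G := (strong_prod P3_adj (raft_adj n)).

(* [depth s a] is the distance of layer [a] from layer 0 for the x side and from
   layer 2 for the y side; [rank] encodes the lexicographic order on
   (depth != 2, index, depth). *)
Definition depth (s : bool) (a : 'I_3) : nat := if s then 2 - a else a.

Definition rank (s : bool) (a : 'I_3) (i : 'I_n.+1) : nat :=
  (if depth s a == 2 then 0 else 3 * n.+1) + 3 * i + depth s a.

Definition raft_dir : rel V := fun p q =>
  if p.2.1 == q.2.1 then rank p.2.1 p.1 p.2.2 < rank q.2.1 q.1 q.2.2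
  else ((p.1 != 2 :> nat) && (q.1 != 2 :> nat)) == ~~ p.2.1.

Definition box (s : bool) (c k : nat) : pred V := fun q =>
  (c <= q.1 <= c.+1) && (if q.2.1 == s then k <= q.2.2 else n.+1 <= k + q.2.2).

Definition out_box (v : V) : pred V :=
  let: (a, (s, i)) := v in
  if depth s a == 2 then box s (~~ s) 0 else box s s i.

Lemma box_clique s c k p q : box s c k p -> box s c k q -> p != q -> G p q.
Proof.
case: p q => a [t i] [b [u j]]; rewrite /box /strong_prod P3_cnbr raft_cnbr /=.
case/andP=> ? Hi /andP[? Hj] ->; apply/andP; split; first lia.
by case: s t u Hi Hj => -[] [] /=; lia.
Qed.

Lemma rank_inj s a i b j : rank s a i = rank s b j -> a = b /\ i = j.
Proof.
move=> eq_rank; suff /andP[/eqP/val_inj -> /eqP/val_inj ->] :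
  (a == b :> nat) && (i == j :> nat) by [].
move: eq_rank; rewrite /rank /depth.
case: a b i j => [a Ha] [b Hb] [i Hi] [j Hj] /=.
case: s; do 2 case: eqP; lia.
Qed.

Lemma raft_dirC p q : p != q -> raft_dir q p = ~~ raft_dir p q.
Proof.
case: p q => a [s i] [b [t j]]; rewrite /raft_dir /= [t == s]eq_sym.
case: (s =P t) => [<- | /eqP neq_st] neq_pq; last first.
  by rewrite andbC; case: s t neq_st {neq_pq} => -[] //=; case: (_ && _).
rewrite ltnNge leq_eqVlt negb_or; case: eqP => [/rank_inj[ea ei] | _] //.
by move: neq_pq; rewrite ea ei eqxx.
Qed.

Definition raft_orient : rel V := fun p q => G p q && raft_dir p q.

Lemma raft_orient_out_box v q : raft_orient v q -> out_box v q.
Proof.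
case: v q => [[a Ha] [s [i Hi]]] [[b Hb] [t [j Hj]]].
rewrite /raft_orient /strong_prod P3_cnbr raft_cnbr /raft_dir /out_box /box /rank /depth /=.
case: s t => -[] /=; do ! case: eqP => /=; lia.
Qed.

Lemma out_box_clique v p q : out_box v p -> out_box v q -> p != q -> G p q.
Proof. by case: v => a [s i]; rewrite /out_box; case: ifP => _; apply: box_clique. Qed.

End Raft.

Theorem proposition19 (n : nat) (hn : 1 <= n) :
  one_perfectly_orientable (strong_prod P3_adj (raft_adj n)).
Proof.
exists (@raft_orient n); split.
  apply: orientation_of_dir; first exact: strong_prod_sym P3_sym (@raft_sym n).
  by move=> p q /andP[/raft_dirC].
by move=> v p q /raft_orient_out_box vp /raft_orient_out_box vq; apply: out_box_clique vp vq.
Qed.
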